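(* Let $G=(V,E)$ be a connected locally finite graph with measure $\mu$ and edge weights $w$ as described in the context, and let $m\ge1$ be an integer. Suppose there are positive constants $\mu_0,\mu_1,w_0$ such that $\mu_0\le\mu(x)\le\mu_1$ for all $x\in V$ and $w_{xy}\ge w_0$ for all $xy\in E$. Then there exists a constant $C$ depending only on $\mu_0,\mu_1,w_0$ and $m$ such that for every $u\in W_0^{m,1}(V)$ and every integer $j\in[0,m/2]$, $$\|\Delta^ju\|_\infty\le C\int_V|\nabla\Delta^ju|\,d\mu.$$
   Context: $G=(V,E)$ is a connected graph with infinitely many vertices in which every vertex has finitely many neighbours; $y\sim x$ means $xy\in E$. A measure $\mu:V\to(0,+\infty)$ is given, and each edge $xy\in E$ carries a weight $w_{xy}>0$. For $u:V\to\mathbb{R}$ define $\Delta u(x)=\frac{1}{\mu(x)}\sum_{y\sim x}w_{xy}(u(y)-u(x))$ and $|\nabla u|(x)=\big(\frac{1}{2\mu(x)}\sum_{y\sim x}w_{xy}(u(y)-u(x))^2\big)^{1/2}$. Integrals are $\int_V f\,d\mu=\sum_{x\in V}\mu(x)f(x)$; $\|f\|_1=\int_V|f|d\mu$ and $\|f\|_\infty=\sup_{x\in V}|f(x)|$. Set $\Delta^0u=u$, $\Delta^ku=\Delta(\Delta^{k-1}u)$, $|\nabla\Delta^ku|=|\nabla(\Delta^ku)|$, and $|\nabla^j u|=|\Delta^k u|$ if $j=2k$, $|\nabla^ju|=|\nabla(\Delta^ku)|$ if $j=2k+1$. $W^{m,1}(V)$ is the space of $u$ with norm $\|u\|_{W^{m,1}(V)}=\sum_{j=0}^m\||\nabla^ju|\|_1<\infty$;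 $C_c(V)$ is the set of finitely supported functions on $V$, and $W_0^{m,1}(V)$ is the completion of $C_c(V)$ under $\|\cdot\|_{W^{m,1}(V)}$. *)

From HB Require Import structures.
From mathcomp Require Import all_boot all_order all_algebra.
From mathcomp Require Import all_classical all_reals all_analysis.
Set Implicit Arguments. Unset Strict Implicit. Unset Printing Implicit Defensive.
Import Order.TTheory GRing.Theory Num.Theory.
Local Open Scope ring_scope.
Local Open Scope classical_set_scope.

(* A weighted graph on vertex type V: adj x is the (finite, duplicate-free)
   list of neighbours of x; w is the edge weight; mu the vertex measure. *)
Section Graph.
Variables (R : realType) (V : choiceType).
Variables (adj : V -> seq V) (mu : V -> R) (w : V -> V -> R).

Definition is_weighted_graph : Prop :=
  [/\ (forall x, uniq (adj x)),
      (forall x y, (y \in adj x) = (x \in adj y)),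
      (forall x y, y \in adj x -> w x y = w y x),
      (forall x y, y \in adj x -> 0 < w x y) &
      (forall x, 0 < mu x)].

Definition graph_connected : Prop :=
  forall x y : V, exists p : seq V,
    path (fun a b => b \in adj a) x p /\ last x p = y.

Definition graph_infinite : Prop := ~ finite_set [set: V].

Definition lap (u : V -> R) : V -> R :=
  fun x => (mu x)^-1 * \sum_(y <- adj x) w x y * (u y - u x).

Definition grad (u : V -> R) : V -> R :=
  fun x => Num.sqrt ((2 * mu x)^-1 * \sum_(y <- adj x) w x y * (u y - u x) ^+ 2).

Definition lapn (k : nat) (u : V -> R) : V -> R := iter k lap u.

Definition gradj (j : nat) (u : V -> R) : V -> R :=
  if odd j then grad (lapn j./2 u) else (fun x => `|lapn j./2 u x|).

Definition norm1 (f : V -> R) : \bar R :=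
  (\esum_(x in [set: V]) ((mu x * `|f x|)%:E))%E.

Definition norminf (f : V -> R) : \bar R :=
  ereal_sup [set (`|f x|)%:E | x in [set: V]].

Definition Wnorm (m : nat) (u : V -> R) : \bar R :=
  (\sum_(0 <= j < m.+1) norm1 (gradj j u))%E.

Definition fin_supp (f : V -> R) : Prop := finite_set [set x | f x != 0].

(* u belongs to W_0^{m,1}(V): the closure of C_c(V) for the W^{m,1} norm *)
Definition inW0 (m : nat) (u : V -> R) : Prop :=
  forall eps : R, 0 < eps ->
    exists phi : V -> R, fin_supp phi /\ ((Wnorm m (fun x => (phi x - u x)%R) ) < eps%:E)%E.

End Graph.

From Pilot Require Import Defs.
From HB Require Import structures.
From mathcomp Require Import all_boot all_order all_algebra.
From mathcomp Require Import all_classical all_reals all_analysis.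
From mathcomp Require Import ring lra.
Set Implicit Arguments. Unset Strict Implicit. Unset Printing Implicit Defensive.
Import Order.TTheory GRing.Theory Num.Theory.
Local Open Scope ring_scope.
Local Open Scope classical_set_scope.

(* Along an edge xy the single term w_xy (f y - f x)^2 of |grad f|(x)^2 gives
   |f y - f x| <= C mu(x) |grad f|(x), so telescoping along a simple path from
   x to y bounds |f x - f y| by C ||grad f||_1.  For f = Delta^j u with u in
   W_0^{m,1}, |f| is arbitrarily small somewhere: approximating u by a finitely
   supported phi, Delta^j phi vanishes at some vertex y of the infinite graph,
   and mu0 |Delta^j (phi - u)|(y) is dominated by the W^{m,1} norm of phi - u. *)

Lemma ler_sum_mem (R : numDomainType) (T : eqType) (s : seq T) (F : T -> R) y :
  y \in s -> (forall z, z \in s -> 0 <= F z) -> F y <= \sum_(z <- s) F z.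
Proof.
move=> ys F_ge0; rewrite (big_rem y ys) /= lerDl big_seq.
by apply: sumr_ge0 => z /mem_rem; exact: F_ge0.
Qed.

Lemma fin_supp_has_zero (R : realType) (V : choiceType) (f : V -> R) :
  graph_infinite V -> fin_supp f -> exists y, f y = 0.
Proof.
move=> V_inf f_fin; apply: contrapT => no_zero; apply: V_inf.
apply: sub_finite_set f_fin => y _ /=; apply/eqP => fy0.
by apply: no_zero; exists y.
Qed.

Definition sobolev_const {R : realType} (mu0 mu1 w0 : R) : R :=
  Num.sqrt (2 * mu1 / w0) / mu0.

Section WeightedGraph.
Variables (R : realType) (V : choiceType).
Variables (adj : V -> seq V) (mu : V -> R) (w : V -> V -> R).

Local Notation lap := (lap adj mu w).
Local Notation lapn := (lapn adj mu w).
Local Notation grad := (grad adj mu w).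

Lemma lapB f g : lap (fun x => f x - g x) = (fun x => lap f x - lap g x).
Proof.
apply/funext => x; rewrite /Defs.lap -mulrBr -sumrB; congr (_ * _).
by apply: eq_bigr => z _; ring.
Qed.

Lemma lapnB j f g : lapn j (fun x => f x - g x) = (fun x => lapn j f x - lapn j g x).
Proof. by elim: j => [//|j IH]; rewrite /Defs.lapn iterS -/(lapn j _) IH lapB. Qed.

Lemma gradj_double j u : gradj adj mu w j.*2 u = (fun x => `|lapn j u x|).
Proof. by rewrite /gradj odd_double doubleK. Qed.

Lemma grad_ge0 f x : 0 <= grad f x.
Proof. exact: sqrtr_ge0. Qed.

Lemma norm1_ge_sum (g : V -> R) (s : seq V) : uniq s ->
  ((\sum_(z <- s) mu z * `|g z|)%:E <= norm1 mu g)%E.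
Proof.
move=> s_uniq; apply: esum_ge; exists [set` s].
  by split => //; apply/finite_seqP; exists s.
by rewrite -fsbig_seq // sumEFin.
Qed.

Hypothesis adj_sym : forall x y, (y \in adj x) = (x \in adj y).

Lemma fin_supp_lap f : fin_supp f -> fin_supp (lap f).
Proof.
case/finite_seqP => s supp_f.
have f_out x : x \notin s -> f x = 0.
  move=> xs; apply: contraNeq xs => fx0.
  by have : [set` s] x by rewrite -supp_f.
apply: (@sub_finite_set _ _ [set` s ++ flatten (map adj s)]); last first.
  by apply/finite_seqP; exists (s ++ flatten (map adj s)).
move=> x /=; apply: contraNT; rewrite mem_cat negb_or => /andP[xs x_far].
rewrite /Defs.lap big_seq big1 ?mulr0 // => z zx.
suff -> : f z = 0 by rewrite f_out ?subrr ?mulr0.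
apply: f_out; apply: contra x_far => zs.
by apply/flattenP; exists (adj z); [apply: map_f | rewrite -adj_sym].
Qed.

Lemma fin_supp_lapn j f : fin_supp f -> fin_supp (lapn j f).
Proof.
move=> f_fin; elim: j => [//|j IH].
by rewrite /Defs.lapn iterS; exact: fin_supp_lap.
Qed.

Hypothesis w_ge0 : forall x y, y \in adj x -> 0 <= w x y.
Hypothesis mu_gt0 : forall x, 0 < mu x.

Lemma norm1_ge0 g : (0 <= norm1 mu g)%E.
Proof. by apply: esum_ge0 => x _; rewrite lee_fin mulr_ge0 // ltW. Qed.

Lemma norm1_le_Wnorm k m u : (k <= m)%N ->
  (norm1 mu (gradj adj mu w k u) <= Wnorm adj mu w m u)%E.
Proof.
move=> km; rewrite /Wnorm (bigD1_seq k) ?mem_index_iota ?iota_uniq //=.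
by apply: leeDl; apply: sume_ge0 => i _; exact: norm1_ge0.
Qed.

Lemma edge_sq_le_grad f x y : y \in adj x ->
  w x y * (f y - f x) ^+ 2 <= 2 * mu x * grad f x ^+ 2.
Proof.
move=> yx; have mux := mu_gt0 x.
set S := \sum_(z <- adj x) w x z * (f z - f x) ^+ 2.
have term_ge0 z : z \in adj x -> 0 <= w x z * (f z - f x) ^+ 2.
  by move=> zx; rewrite mulr_ge0 ?sqr_ge0 ?w_ge0.
have S_ge0 : 0 <= S by rewrite /S big_seq sumr_ge0.
rewrite /Defs.grad -/S sqr_sqrtr; last by rewrite mulr_ge0 // invr_ge0 mulr_ge0 // ltW.
rewrite [2 * mu x * _]mulrA divff ?mulf_neq0 ?gt_eqF // mul1r.
exact: (ler_sum_mem (F := fun z => w x z * (f z - f x) ^+ 2) yx term_ge0).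
Qed.

End WeightedGraph.

Section BoundedGeometry.
Variables (R : realType) (V : choiceType).
Variables (adj : V -> seq V) (mu : V -> R) (w : V -> V -> R).
Variables (mu0 mu1 w0 : R).
Hypotheses (mu0_gt0 : 0 < mu0) (w0_gt0 : 0 < w0).
Hypothesis mu_bounds : forall x, mu0 <= mu x <= mu1.
Hypothesis w_lbound : forall x y, y \in adj x -> w0 <= w x y.

Local Notation lapn := (lapn adj mu w).
Local Notation grad := (grad adj mu w).
Local Notation C := (sobolev_const mu0 mu1 w0).

Let mu_gt0 x : 0 < mu x.
Proof. by case/andP: (mu_bounds x) => /(lt_le_trans mu0_gt0). Qed.

Let w_ge0 x y : y \in adj x -> 0 <= w x y.
Proof. by move/w_lbound; apply: le_trans; exact: ltW. Qed.

Lemma sobolev_const_ge0 : 0 <= C.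
Proof. by rewrite divr_ge0 ?sqrtr_ge0 ?ltW. Qed.

Lemma edge_diff_le f x y : y \in adj x -> `|f y - f x| <= C * (mu x * grad f x).
Proof.
move=> yx; have /andP[mu0x mux1] := mu_bounds x.
set g := grad f x; set c := Num.sqrt (2 * mu1 / w0).
have g_ge0 : 0 <= g by exact: grad_ge0.
have c_ge0 : 0 <= c by exact: sqrtr_ge0.
have diff_le : `|f y - f x| <= c * g.
  rewrite -ler_sqr ?nnegrE ?mulr_ge0 // real_normK ?num_real //.
  have mu1_gt0 : 0 < mu1 := lt_le_trans (mu_gt0 x) mux1.
  rewrite exprMn sqr_sqrtr; last by rewrite divr_ge0 // ltW // mulr_gt0.
  rewrite mulrAC ler_pdivlMr //.
  have w0_le := w_lbound yx; have := edge_sq_le_grad w_ge0 mu_gt0 f yx.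
  have := sqr_ge0 (f y - f x); have := sqr_ge0 g; rewrite -/g; nra.
apply: (le_trans diff_le).
have -> : C * (mu x * g) = c * g * (mu x / mu0).
  by rewrite /sobolev_const -/c; field; rewrite gt_eqF.
by rewrite ler_peMr ?mulr_ge0 // ler_pdivlMr // mul1r.
Qed.

Lemma path_diff_le f p x : path (fun a b => b \in adj a) x p ->
  `|f x - f (last x p)| <= C * \sum_(z <- x :: p) mu z * `|grad f z|.
Proof.
elim: p x => [|y p IH] x /=.
  move=> _; rewrite subrr normr0 big_seq1.
  by rewrite mulr_ge0 ?sobolev_const_ge0 // mulr_ge0 // ltW.
move=> /andP[yx p_path]; rewrite big_cons mulrDr [`|grad f x|]ger0_norm ?grad_ge0 //.
apply: le_trans (ler_distD (f y) _ _) _; rewrite distrC.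
exact: lerD (edge_diff_le f yx) (IH y p_path).
Qed.

Lemma dist_le_norm1_grad f x y : graph_connected adj ->
  (`|f x - f y|%:E <= C%:E * norm1 mu (grad f))%E.
Proof.
move=> connected; have [p [p_path <-]] := connected x y.
case: (shortenP p_path) => q q_path q_uniq _.
apply: (le_trans _ (lee_wpmul2l _ (norm1_ge_sum mu (grad f) q_uniq))).
  by rewrite -EFinM lee_fin path_diff_le.
by rewrite lee_fin sobolev_const_ge0.
Qed.

Lemma norminf_le_norm1_grad f : graph_connected adj ->
  (forall e, 0 < e -> exists y, `|f y| < e) ->
  (norminf f <= C%:E * norm1 mu (grad f))%E.
Proof.
move=> connected f_small; apply: ge_ereal_sup => _ [x _ <-].
apply/lee_addgt0Pr => e e_gt0; have [y fy_small] := f_small e e_gt0.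
have -> : f x = (f x - f y) + f y by rewrite subrK.
apply: (le_trans (_ : _ <= `|f x - f y|%:E + `|f y|%:E)%E).
  by rewrite -EFinD lee_fin ler_normD.
by apply: leeD; [exact: dist_le_norm1_grad | rewrite lee_fin ltW].
Qed.

Hypothesis adj_sym : forall x y, (y \in adj x) = (x \in adj y).

Lemma lapn_small_somewhere m u j : graph_infinite V -> inW0 adj mu w m u ->
  (j.*2 <= m)%N -> forall e, 0 < e -> exists y, `|lapn j u y| < e.
Proof.
move=> V_inf u_W0 jm e e_gt0.
have [phi [phi_fin phi_close]] := u_W0 (e * mu0) (mulr_gt0 e_gt0 mu0_gt0).
have [y lapn_phi_y] := fin_supp_has_zero V_inf (fin_supp_lapn mu w adj_sym j phi_fin).
exists y; rewrite -(ltr_pM2r mu0_gt0).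
have : ((mu y * `|lapn j (fun x => phi x - u x) y|)%:E < (e * mu0)%:E)%E.
  apply: le_lt_trans phi_close; apply: le_trans (norm1_le_Wnorm _ _ mu_gt0 _ jm).
  have := norm1_ge_sum mu (gradj adj mu w j.*2 (fun x => phi x - u x)) (s := [:: y]) isT.
  by rewrite big_seq1 gradj_double normr_id.
rewrite lte_fin lapnB lapn_phi_y sub0r normrN; apply: le_lt_trans.
by rewrite mulrC ler_wpM2r //; case/andP: (mu_bounds y).
Qed.

End BoundedGeometry.

Theorem theorem1p6 (R : realType) (mu0 mu1 w0 : R) (m : nat) :
  0 < mu0 -> 0 < mu1 -> 0 < w0 -> (1 <= m)%N ->
  exists C : R,
    forall (V : choiceType) (adj : V -> seq V) (mu : V -> R) (w : V -> V -> R),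
      is_weighted_graph adj mu w ->
      graph_connected adj ->
      graph_infinite V ->
      (forall x, mu0 <= mu x <= mu1) ->
      (forall x y, y \in adj x -> w0 <= w x y) ->
      forall u : V -> R, inW0 adj mu w m u ->
      forall j : nat, (j.*2 <= m)%N ->
        (norminf (lapn adj mu w j u) <= C%:E * norm1 mu (grad adj mu w (lapn adj mu w j u)))%E.
Proof.
move=> mu0_gt0 _ w0_gt0 _; exists (sobolev_const mu0 mu1 w0).
move=> V adj mu w [_ adj_sym _ _ _] connected V_inf mu_bounds w_lbound u u_W0 j jm.
apply: (norminf_le_norm1_grad mu0_gt0 w0_gt0 mu_bounds w_lbound connected).
exact: (lapn_small_somewhere mu0_gt0 mu_bounds adj_sym V_inf u_W0 jm).
Qed.
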